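(* Let $N$ be a composite number with $N=\prod_{i=1}^{a}p_i^{2n_i}\prod_{j=1}^{b}q_j^{2m_j+1}$, where $p_1,\ldots,p_a,q_1,\ldots,q_b$ are distinct primes, $n_i\geq 1$ and $m_j\geq 0$ are integers. Then $box(\Gamma(\mathbb{Z}_N))\leq \prod_{i=1}^{a}(2n_i+1)\prod_{j=1}^{b}(2m_j+2)-\prod_{i=1}^{a}(n_i+1)\prod_{j=1}^{b}(m_j+1)-1.$
   Context: $\mathbb{Z}_N$ is the ring of integers modulo $N$. The zero-divisor graph $\Gamma(R)$ of a ring $R$ has as vertices the non-zero zero-divisors of $R$, two distinct vertices $x,y$ being adjacent iff $xy=0$. The boxicity $box(G)$ is the least positive integer $\ell$ such that $G$ is isomorphic to the intersection graph of a family of $\ell$-boxes (Cartesian products of $\ell$ closed bounded real intervals). *)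

From Stdlib Require Import Reals ClassicalEpsilon.
From mathcomp Require Import all_boot all_algebra.
Set Implicit Arguments. Unset Strict Implicit. Unset Printing Implicit Defensive.

(* A family (b_v)_{v in V} of l-boxes in R^l: b_v = prod_k [lo v k, hi v k]. *)
Definition box_rep (V : finType) (adj : rel V) (l : nat) : Prop :=
  exists (lo hi : V -> 'I_l -> R),
    (forall v k, Rle (lo v k) (hi v k)) /\
    forall u v : V, u != v ->
      (adj u v <->
       exists pt : 'I_l -> R, forall k,
         (Rle (lo u k) (pt k) /\ Rle (pt k) (hi u k)) /\
         (Rle (lo v k) (pt k) /\ Rle (pt k) (hi v k))).

Definition box_repb (V : finType) (adj : rel V) (l : nat) : bool :=
  if excluded_middle_informative (box_rep adj l) then true else false.

(* Boxicity: least l such that G is an intersection graph of l-boxes.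
   (l = 0 is allowed: this gives the standard convention box(K_n) = 0;
   for non-complete graphs it coincides with the least positive l.)
   The fallback value 0 is never used for finite graphs. *)
Definition boxicity (V : finType) (adj : rel V) : nat :=
  match excluded_middle_informative (exists l, box_repb adj l) with
  | left H => ex_minn H
  | right _ => 0
  end.

Local Open Scope ring_scope.

Definition is_zdiv (N : nat) (x : 'Z_N) : bool :=
  (x != 0) && [exists y : 'Z_N, (y != 0) && (x * y == 0)].

Definition zdv (N : nat) := {x : 'Z_N | is_zdiv x}.

Definition zdg (N : nat) : rel (zdv N) :=
  fun x y => (val x != val y) && (val x * val y == 0).

(* Write g x = gcd(x, N) for a non-zero zero-divisor x of Z_N.  Then x y = 0
   iff N | g x * g y, so Gamma(Z_N) is determined by these labels, which are
   divisors d > 1 of N.  Use one coordinate per label d with N not dividing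
   d^2: there a vertex labelled d is a point of its own, a vertex whose label
   is adjacent to d spans the whole range, and all other vertices sit at the
   far end.  Two non-adjacent vertices are separated in the coordinate of one
   of their labels, which is not self-adjacent since N | g x ^ 2 and
   N | g y ^ 2 would force N | g x * g y.  Finally, a divisor d of N with
   N not dividing d^2 has some exponent below half of that of N, and counting
   exponent vectors (and discarding d = 1) gives the bound. *)
From Stdlib Require Import Reals Lra ClassicalEpsilon.
From mathcomp Require Import all_boot all_algebra.
From mathcomp Require Import zify.

Lemma box_rep_nat (V : finType) (adj : rel V) l (lo hi : V -> 'I_l -> nat) :
  (forall v k, lo v k <= hi v k) ->
  (forall u v, u != v ->
     adj u v = [forall k, (lo u k <= hi v k) && (lo v k <= hi u k)]) ->
  box_rep adj l.
Proof.
move=> lo_le_hi adjE.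
have le_INR' a b : a <= b -> Rle (INR a) (INR b) by move/leP; apply: le_INR.
exists (fun v k => INR (lo v k)), (fun v k => INR (hi v k)).
split=> [v k | u v uv]; first exact: le_INR'.
rewrite adjE //; split.
  move=> /forallP meet; exists (fun k => INR (maxn (lo u k) (lo v k))) => k.
  have /andP[luv lvu] := meet k.
  by do !split; apply: le_INR'; rewrite ?leq_maxl ?leq_maxr ?geq_max ?lvu ?luv ?lo_le_hi.
move=> [pt in_boxes]; apply/forallP => k; have [[? ?] [? ?]] := in_boxes k.
by apply/andP; split; apply/leP/INR_le; lra.
Qed.

Lemma boxicity_le {V : finType} {adj : rel V} {l} : box_rep adj l -> boxicity adj <= l.
Proof.
move=> box_l; have box_lb : box_repb adj l.
  by rewrite /box_repb; case: excluded_middle_informative.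
rewrite /boxicity; case: excluded_middle_informative => // ex_l.
by case: ex_minnP => k _; apply.
Qed.

Section LabelledGraph.

Variables (V D : finType) (adj : rel V) (g : V -> D) (R : rel D) (S : {set D}).
Hypotheses (R_sym : symmetric R)
  (R_loops_clique : forall d e, R d d -> R e e -> R d e)
  (adjE : forall u v, u != v -> adj u v = R (g u) (g v))
  (S_loopless : forall d, d \in S -> ~~ R d d)
  (S_covers : forall v, ~~ R (g v) (g v) -> g v \in S).

Let coord (k : 'I_#|S|) : D := enum_val k.

Definition label_lo v k :=
  if g v == coord k then enum_rank v : nat else if R (g v) (coord k) then 0 else #|V|.
Definition label_hi v k := if g v == coord k then enum_rank v : nat else #|V|.

Lemma label_boxes_meetE u v k : u != v ->
  (label_lo u k <= label_hi v k) && (label_lo v k <= label_hi u k) =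
  ((g u == coord k) || (g v == coord k)) ==> R (g u) (g v).
Proof.
move=> uv; have d_loopless := S_loopless _ (enum_valP k).
have rank_lt w : enum_rank w < #|V| := ltn_ord (enum_rank w).
rewrite /label_lo /label_hi.
have [gu|gu] := eqVneq (g u) (coord k); have [gv|gv] := eqVneq (g v) (coord k) => /=.
- have neq_rank : (enum_rank u : nat) != enum_rank v.
    by rewrite val_eqE (inj_eq enum_rank_inj).
  by rewrite -eqn_leq (negbTE neq_rank) gu gv (negbTE d_loopless).
- by rewrite ltnW //= -gu R_sym; case: R; rewrite // leqNgt rank_lt.
- by rewrite (ltnW (rank_lt v)) andbT -gv; case: R; rewrite // leqNgt rank_lt.
- by case: R; case: R; rewrite ?leqnn.
Qed.

Lemma box_rep_labelled : box_rep adj #|S|.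
Proof.
apply: (@box_rep_nat _ _ _ label_lo label_hi).
  by move=> v k; rewrite /label_lo /label_hi; case: ifP => // _; case: ifP.
move=> u v uv; rewrite adjE //; apply/idP/forallP => [Ruv k|meet].
  by rewrite label_boxes_meetE // Ruv implybT.
apply: contraT => nRuv.
have separating w : ~~ R (g w) (g w) -> (g u == g w) || (g v == g w) -> false.
  move=> w_loopless uvw; have := meet (enum_rank_in (S_covers _ w_loopless) (g w)).
  rewrite label_boxes_meetE // /coord enum_rankK_in ?(S_covers _ w_loopless) //.
  by rewrite uvw (negbTE nRuv).
have [Ruu|] := boolP (R (g u) (g u)); last by move/separating; rewrite eqxx; apply.
apply: (separating v); rewrite ?eqxx ?orbT //.
by apply: contra nRuv; apply: R_loops_clique.
Qed.

End LabelledGraph.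

Lemma dvdn_mul_gcd N u v : (N %| u * v) = (N %| gcdn u N * gcdn v N).
Proof.
rewrite muln_gcdl muln_gcdr [N * _]muln_gcdr !dvdn_gcd.
by rewrite (dvdn_mull u (dvdnn N)) (dvdn_mulr v (dvdnn N)) (dvdn_mulr N (dvdnn N))
  !andbT.
Qed.

Lemma dvdn_mul_of_sqr N d e : N %| d * d -> N %| e * e -> N %| d * e.
Proof.
move=> Nd Ne; rewrite -(@dvdn_pexp2r _ _ 2) // expnMn -!mulnn.
exact: dvdn_mul.
Qed.

Section ZeroDivisorGraph.

Variable N : nat.
Hypothesis N_gt1 : 1 < N.

Lemma Zp_val_lt (x : 'Z_N) : x < N.
Proof. by rewrite -[N in _ < N](Zp_cast N_gt1). Qed.

Lemma Zp_mul_eq0 (x y : 'Z_N) : (x * y == 0)%R = (N %| x * y).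
Proof.
by rewrite -val_eqE /=; move: (x : nat) (y : nat) => u v; rewrite (Zp_cast N_gt1).
Qed.

Definition zdv_gcd (x : zdv N) : 'I_N.+1 := inord (gcdn (val x) N).

Lemma zdv_gcdE x : zdv_gcd x = gcdn (val x) N :> nat.
Proof. by rewrite inordK // ltnS dvdn_leq ?dvdn_gcdr // ltnW. Qed.

Lemma zdv_gcd_dvd x : zdv_gcd x %| N.
Proof. by rewrite zdv_gcdE dvdn_gcdr. Qed.

(* A unit of Z_N is not a zero-divisor. *)
Lemma zdv_gcd_gt1 x : 1 < zdv_gcd x.
Proof.
have N_gt0 : 0 < N by apply: ltnW.
rewrite zdv_gcdE ltn_neqAle gcdn_gt0 N_gt0 orbT andbT eq_sym.
case: x => x /= /andP[_ /existsP[y /andP[y_neq0 xy_eq0]]].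
apply: contraL xy_eq0 => /eqP gcd_xN_eq1.
have coprime_Nx : coprime N x by rewrite /coprime gcdnC gcd_xN_eq1.
rewrite Zp_mul_eq0 (Gauss_dvdr _ coprime_Nx); apply: contra y_neq0.
by rewrite -val_eqE /dvdn modn_small ?Zp_val_lt.
Qed.

Lemma zdgE x y : x != y -> zdg x y = (N %| zdv_gcd x * zdv_gcd y).
Proof.
move=> xy; rewrite /zdg (inj_eq val_inj) xy Zp_mul_eq0 !zdv_gcdE.
exact: dvdn_mul_gcd.
Qed.

Definition sqr_nondvd_divisors := [set d : 'I_N.+1 | (d %| N) && ~~ (N %| d * d)].

Lemma card_sqr_nondvd_divisors_gt1 :
  #|[set d in sqr_nondvd_divisors | 1 < d]| < #|sqr_nondvd_divisors|.
Proof.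
apply/proper_card/properP; split.
  by apply/subsetP => d; rewrite inE => /andP[].
exists (inord 1); rewrite !inE inordK ?ltnS ?(ltnW N_gt1) ?ltnn ?andbF //.
by rewrite dvd1n muln1 dvdn1 neq_ltn N_gt1 orbT.
Qed.

Lemma box_rep_zdg : box_rep (@zdg N) #|[set d in sqr_nondvd_divisors | 1 < d]|.
Proof.
apply: (@box_rep_labelled _ _ _ zdv_gcd (fun d e : 'I_N.+1 => N %| d * e)).
- by move=> d e /=; rewrite mulnC.
- by move=> d e; apply: dvdn_mul_of_sqr.
- exact: zdgE.
- by move=> d; rewrite !inE => /andP[/andP[]].
- by move=> x Nx; rewrite !inE zdv_gcd_dvd zdv_gcd_gt1 Nx.
Qed.

End ZeroDivisorGraph.

Lemma card_ord_interval K m n : n < K -> #|[pred k : 'I_K | m <= k <= n]| = n.+1 - m.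
Proof.
move=> n_lt_K; rewrite -sum1_card -[n.+1 - m]muln1.
rewrite -sum_nat_const_nat big_geq_mkord.
by rewrite (big_ord_widen_cond K (fun i => true && (m <= i)) (fun=> 1)).
Qed.

Lemma card_family_interval (I : finType) K (l h : I -> nat) : (forall i, h i < K) ->
  #|[set f : {ffun I -> 'I_K} | f \in family (fun i => [pred k : 'I_K | l i <= k <= h i])]|
  = \prod_i ((h i).+1 - l i).
Proof.
move=> h_lt_K; rewrite cardsE card_family foldrE big_map big_enum /=.
by apply: eq_bigr => i _; apply: card_ord_interval.
Qed.

Lemma logn_prod (I : finType) (F : I -> nat) r :
  (forall i, 0 < F i) -> logn r (\prod_i F i) = \sum_i logn r (F i).
Proof.
move=> F_gt0; apply: (proj1 (big_ind2 (fun m s => logn r m = s /\ 0 < m) _ _ _)).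
- by rewrite logn1.
- move=> m1 s1 m2 s2 [<- m1_gt0] [<- m2_gt0].
  by rewrite lognM // muln_gt0 m1_gt0.
- by move=> i _.
Qed.

Lemma dvdn_logn m n : 0 < m -> 0 < n ->
  (forall r, prime r -> logn r m <= logn r n) -> m %| n.
Proof.
move=> m_gt0 n_gt0 le_logn; apply/dvdn_partP => // r.
by rewrite mem_primes => /and3P[r_prime _ _]; rewrite p_part pfactor_dvdn ?le_logn.
Qed.

Section DivisorCount.

Variables (I : finType) (p hi lo : I -> nat).
Hypotheses (p_prime : forall i, prime (p i)) (p_inj : injective p)
  (lo_le_hi : forall i, lo i <= hi i) (hi_le_double_lo : forall i, hi i <= lo i * 2).

Let N := \prod_i p i ^ hi i.

Let N_gt0 : 0 < N.
Proof. by rewrite prodn_gt0 // => i; rewrite expn_gt0 prime_gt0. Qed.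

Lemma logn_prod_pexp r : logn r N = \sum_i hi i * (r == p i).
Proof.
rewrite logn_prod => [|i]; last by rewrite expn_gt0 prime_gt0.
by apply: eq_bigr => i _; rewrite lognX logn_prime.
Qed.

Lemma logn_prod_pexp_p i : logn (p i) N = hi i.
Proof.
rewrite logn_prod_pexp (bigD1 i) //= eqxx muln1 big1 ?addn0 // => j ji.
by rewrite (inj_eq p_inj) eq_sym (negbTE ji) muln0.
Qed.

Lemma logn_dvd_prod_pexp_other d r : d %| N -> (forall i, r != p i) -> logn r d = 0.
Proof.
move=> d_dvd_N r_notin; apply/eqP; rewrite -leqn0.
rewrite (leq_trans (dvdn_leq_log _ N_gt0 d_dvd_N)) // logn_prod_pexp.
by rewrite big1 // => i _; rewrite (negbTE (r_notin i)) muln0.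
Qed.

Definition exponents (d : nat) : {ffun I -> 'I_N.+1} := [ffun i => inord (logn (p i) d)].

Lemma exponentsE d i : d %| N -> exponents d i = logn (p i) d :> nat.
Proof.
move=> d_dvd_N; rewrite ffunE inordK // ltnS.
by rewrite (leq_trans (dvdn_leq_log _ N_gt0 d_dvd_N)) // ltnW // ltn_logl.
Qed.

Lemma exponents_inj d e : d %| N -> e %| N -> exponents d = exponents e -> d = e.
Proof.
move=> d_dvd_N e_dvd_N exponents_de.
apply: eqn_from_log; rewrite ?(dvdn_gt0 N_gt0) // => r.
have [/existsP[i /eqP ->]|] := boolP [exists i, r == p i].
  by rewrite -!exponentsE // exponents_de.
rewrite negb_exists => /forallP r_notin.
by rewrite (logn_dvd_prod_pexp_other _ _ d_dvd_N r_notin)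
  (logn_dvd_prod_pexp_other _ _ e_dvd_N r_notin).
Qed.

Lemma dvdn_sqr_of_exponents d : d %| N -> (forall i, lo i <= logn (p i) d) -> N %| d * d.
Proof.
move=> d_dvd_N lo_le_exponents; have d_gt0 := dvdn_gt0 N_gt0 d_dvd_N.
apply: dvdn_logn; rewrite ?muln_gt0 ?d_gt0 // => r _.
rewrite lognM //; have [/existsP[i /eqP ->]|] := boolP [exists i, r == p i].
  rewrite logn_prod_pexp_p addnn -mul2n mulnC (leq_trans (hi_le_double_lo i)) //.
  by rewrite leq_mul2r lo_le_exponents orbT.
rewrite negb_exists => /forallP r_notin.
by rewrite logn_prod_pexp big1 // => i _; rewrite (negbTE (r_notin i)) muln0.
Qed.

Lemma card_sqr_nondvd_divisors :
  #|sqr_nondvd_divisors N| <= \prod_i (hi i).+1 - \prod_i (hi i - lo i).+1.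
Proof.
pose F (l : I -> nat) := [set f : {ffun I -> 'I_N.+1} |
  f \in family (fun i => [pred k : 'I_N.+1 | l i <= k <= hi i])].
have hi_lt i : hi i < N.+1.
  by rewrite -(logn_prod_pexp_p i) ltnS ltnW // ltn_logl.
have Flo_sub_F0 : F lo \subset F (fun=> 0).
  apply/subsetP => f; rewrite !inE => /familyP lo_le_f; apply/familyP => i.
  by have /andP[_] := lo_le_f i; rewrite inE.
have exponents_sub :
    [set exponents d | d : 'I_N.+1 in sqr_nondvd_divisors N] \subset F (fun=> 0) :\: F lo.
  apply/subsetP => f /imsetP[d]; rewrite inE => /andP[d_dvd_N N_ndvd_dd] ->.
  rewrite !inE; apply/andP; split.
    apply: contra N_ndvd_dd => /familyP lo_le_exponents.
    apply: dvdn_sqr_of_exponents => // i.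
    by have := lo_le_exponents i; rewrite inE exponentsE // => /andP[].
  apply/familyP => i; rewrite inE exponentsE //.
  by rewrite -(logn_prod_pexp_p i) dvdn_leq_log.
rewrite -(card_in_imset (f := fun d : 'I_N.+1 => exponents d)); last first.
  move=> d e; rewrite !inE => /andP[d_dvd_N _] /andP[e_dvd_N _].
  by move/exponents_inj => /(_ d_dvd_N e_dvd_N) /val_inj.
apply: leq_trans (subset_leq_card exponents_sub) _.
rewrite cardsD (setIidPr Flo_sub_F0) !card_family_interval //.
by apply: eq_leq; congr (_ - _); apply: eq_bigr => i _; rewrite subSn.
Qed.

Lemma boxicity_zdg_prod_pexp : 1 < N ->
  boxicity (@zdg N) <= \prod_i (hi i).+1 - \prod_i (hi i - lo i).+1 - 1.
Proof.
move=> N_gt1; apply: leq_trans (boxicity_le (@box_rep_zdg N N_gt1)) _.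
have := leq_sub2r 1 (leq_trans (@card_sqr_nondvd_divisors_gt1 N N_gt1)
  card_sqr_nondvd_divisors).
by rewrite subSS subn0.
Qed.

End DivisorCount.

Theorem theorem5p2 (N a b : nat)
  (p n : 'I_a -> nat) (q m : 'I_b -> nat) :
  (forall i, prime (p i)) -> (forall j, prime (q j)) ->
  injective p -> injective q -> (forall i j, p i != q j) ->
  (forall i, 1 <= n i) ->
  N = (\prod_(i < a) p i ^ (2 * n i) * \prod_(j < b) q j ^ (2 * m j + 1))%N ->
  1 < N -> ~~ prime N ->
  (boxicity (@zdg N) <=
     \prod_(i < a) (2 * n i + 1) * \prod_(j < b) (2 * m j + 2)
     - \prod_(i < a) (n i + 1) * \prod_(j < b) (m j + 1) - 1)%N.
Proof.
move=> p_prime q_prime p_inj q_inj p_neq_q _ N_def N_gt1 _.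
pose pq x := match x with inl i => p i | inr j => q j end.
pose hi x := match x with inl i => 2 * n i | inr j => 2 * m j + 1 end.
pose lo x := match x with inl i => n i | inr j => m j + 1 end.
have pq_inj : injective pq.
  case=> [i|j] [i'|j'] /= eq_pq.
  - by rewrite (p_inj _ _ eq_pq).
  - by case/eqP: (p_neq_q i j').
  - by case/eqP: (p_neq_q i' j).
  - by rewrite (q_inj _ _ eq_pq).
have pq_prime x : prime (pq x) by case: x.
have lo_le_hi x : lo x <= hi x by case: x => /= *; lia.
have hi_le_double_lo x : hi x <= lo x * 2 by case: x => /= *; lia.
have N_prod : N = \prod_x pq x ^ hi x by rewrite N_def big_sumType.
have hi_prod : \prod_i (2 * n i + 1) * \prod_j (2 * m j + 2) = \prod_x (hi x).+1.
  by rewrite big_sumType; congr (_ * _); apply: eq_bigr => * /=; lia.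
have lo_prod : \prod_i (n i + 1) * \prod_j (m j + 1) = \prod_x (hi x - lo x).+1.
  by rewrite big_sumType; congr (_ * _); apply: eq_bigr => * /=; lia.
rewrite hi_prod lo_prod; move: N_gt1; rewrite N_prod.
exact: boxicity_zdg_prod_pexp.
Qed.
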